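(* Let $d,K\ge2$, $a^\dagger\in\{1,\dots,K\}$, $\upsilon>0$, $\delta\in(0,1)$, $\xi>0$, $x^\dagger\in\mathbb{R}^d$. For each arm $a$ let $\hat\theta_a\in\mathbb{R}^d$ and $\widetilde V_a\in\mathbb{R}^{d\times d}$ be symmetric positive definite, and for $a\ne a^\dagger$ put $A_a=\widetilde V_a^{-1}+\widetilde V_{a^\dagger}^{-1}$ and $$\mathcal C'_a=\Big\{z\in\mathbb{R}^d:\ \|z-\hat\theta_a\|_{A_a^{-1}}\le \upsilon\,\Phi^{-1}\Big(1-\tfrac{\delta}{K-1}\Big)\Big\}.$$ Then for every $y\in\mathbb{R}^d$ and $a\neq a^\dagger$, the inequality $$\langle x^\dagger+y,\hat\theta_{a^\dagger}-\hat\theta_a\rangle-\xi\ \ge\ \upsilon\,\Phi^{-1}\Big(1-\tfrac{\delta}{K-1}\Big)\,\|x^\dagger+y\|_{\widetilde V_a^{-1}+\widetilde V_{a^\dagger}^{-1}}$$ is equivalent to $\langle x^\dagger+y,\hat\theta_{a^\dagger}\rangle-\xi\ge\max_{z\in\mathcal C'_a}\langle z,x^\dagger+y\rangle$; consequently, the problem of minimizing $\|y\|$ subject to this inequality for all $a\neq a^\dagger$ is feasible if and only if $\hat\theta_{a^\dagger}\notin\mathrm{Conv}\big(\bigcup_{a\neq a^\dagger}\mathcal C'_a\big)$.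
   Context: $\Phi$ is the standard normal cumulative distribution function; $\|x\|_V=\sqrt{x^\top Vx}$; $\mathrm{Conv}$ is the convex hull. This is the relaxed attacker problem against Linear Thompson Sampling (posterior samples $\tilde\theta_a\sim\mathcal N(\hat\theta_a,\upsilon^2\widetilde V_a^{-1})$), i.e. a second-order cone program. (For the equivalence, $\Phi^{-1}(1-\delta/(K-1))\ge0$ is assumed, i.e. $\delta\le (K-1)/2$.) *)

From Stdlib Require Import Reals Lra Lia.
Open Scope R_scope.

Definition gauss (t : R) : R := exp (- (t * t) / 2).

Lemma gauss_cont : continuity gauss.
Proof.
  unfold gauss. apply continuity_comp with (f1 := fun t => - (t * t) / 2).
  - reg.
  - apply derivable_continuous, derivable_exp.
Qed.

Lemma gauss_integrable (a b : R) : Riemann_integrable gauss a b.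
Proof.
  destruct (Rle_dec a b) as [H|H].
  - apply continuity_implies_RiemannInt; [exact H|intros; apply gauss_cont].
  - apply RiemannInt_P1, continuity_implies_RiemannInt; [lra|intros; apply gauss_cont].
Qed.

Definition Phi (x : R) : R :=
  / 2 + / sqrt (2 * PI) * RiemannInt (gauss_integrable 0 x).

(* ---------- Finite-dimensional linear algebra, vectors = nat -> R (coords < d) ---------- *)
Fixpoint rsum (n : nat) (f : nat -> R) : R :=
  match n with O => 0 | S m => rsum m f + f m end.

Definition vec := nat -> R.
Definition mat := nat -> nat -> R.

Definition vadd (x y : vec) : vec := fun i => x i + y i.
Definition vsub (x y : vec) : vec := fun i => x i - y i.
Definition madd (M N : mat) : mat := fun i j => M i j + N i j.

Definition dot (d : nat) (x y : vec) : R := rsum d (fun i => x i * y i).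
Definition mv (d : nat) (M : mat) (x : vec) : vec := fun i => rsum d (fun j => M i j * x j).
Definition Mnorm (d : nat) (M : mat) (x : vec) : R := sqrt (dot d x (mv d M x)).

Definition symmetric (d : nat) (M : mat) : Prop :=
  forall i j, (i < d)%nat -> (j < d)%nat -> M i j = M j i.
Definition posdef (d : nat) (M : mat) : Prop :=
  forall x : vec, (exists i, (i < d)%nat /\ x i <> 0) -> 0 < dot d x (mv d M x).
Definition is_inv (d : nat) (M N : mat) : Prop :=
  forall i j, (i < d)%nat -> (j < d)%nat ->
    rsum d (fun k => M i k * N k j) = if Nat.eqb i j then 1 else 0.

Definition is_max (S : R -> Prop) (m : R) : Prop :=
  S m /\ forall v, S v -> v <= m.

Definition conv (d : nat) (S : vec -> Prop) (x : vec) : Prop :=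
  exists (n : nat) (lam : nat -> R) (p : nat -> vec),
    (forall k, (k < n)%nat -> 0 <= lam k /\ S (p k)) /\
    rsum n lam = 1 /\
    forall i, (i < d)%nat -> x i = rsum n (fun k => lam k * p k i).

(* With x = x† + y, the constraint for arm a says that the linear functional <x, .> is at
   least ξ larger at θ_{a†} than its maximum over the ellipsoid C'_a; by Cauchy-Schwarz for
   the form A_a^{-1} that maximum is <θ_a, x> + υ c |x|_{A_a}, which gives the first part.
   A feasible y therefore yields a functional separating θ_{a†} by ξ from every C'_a, hence
   from their convex hull. Conversely, the convex hull of finitely many compact convex sets
   is compact, so it contains a point s nearest to θ_{a†}; if θ_{a†} lies outside, then
   e = θ_{a†} - s satisfies <e, z> <= <e, θ_{a†}> - |e|^2 on the hull, and x = (ξ/|e|^2) e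
   is feasible. The quantile c is nonnegative because δ <= (K-1)/2. *)

From Stdlib Require Import Reals Lra Lia FunctionalExtensionality Classical ClassicalEpsilon List.
Open Scope R_scope.

Lemma rsum_ext n f g : (forall k, (k < n)%nat -> f k = g k) -> rsum n f = rsum n g.
Proof.
  induction n as [|n IH]; intros H; simpl; [reflexivity|].
  rewrite IH by (intros; apply H; lia). rewrite H by lia. reflexivity.
Qed.

Lemma rsum_add n f g : rsum n (fun k => f k + g k) = rsum n f + rsum n g.
Proof. induction n as [|n IH]; simpl; [lra|rewrite IH; lra]. Qed.

Lemma rsum_sub n f g : rsum n (fun k => f k - g k) = rsum n f - rsum n g.
Proof. induction n as [|n IH]; simpl; [lra|rewrite IH; lra]. Qed.

Lemma rsum_mult_l n c f : rsum n (fun k => c * f k) = c * rsum n f.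
Proof. induction n as [|n IH]; simpl; [lra|rewrite IH; lra]. Qed.

Lemma rsum_mult_r n c f : rsum n (fun k => f k * c) = rsum n f * c.
Proof. induction n as [|n IH]; simpl; [lra|rewrite IH; lra]. Qed.

Lemma rsum_eq0 n f : (forall k, (k < n)%nat -> f k = 0) -> rsum n f = 0.
Proof.
  induction n as [|n IH]; intros H; simpl; [reflexivity|].
  rewrite IH by (intros; apply H; lia). rewrite H by lia. lra.
Qed.

Lemma rsum_exchange n m f :
  rsum n (fun i => rsum m (fun j => f i j)) = rsum m (fun j => rsum n (fun i => f i j)).
Proof.
  induction n as [|n IH]; simpl.
  - symmetry. apply rsum_eq0. reflexivity.
  - rewrite IH, <- rsum_add. reflexivity.
Qed.

Lemma rsum_indicator n i f :
  (i < n)%nat -> rsum n (fun k => if Nat.eqb k i then f k else 0) = f i.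
Proof.
  induction n as [|n IH]; intros Hi; [lia|simpl].
  destruct (Nat.eqb_spec n i) as [->|Hne].
  - rewrite rsum_eq0; [lra|]. intros k Hk. destruct (Nat.eqb_spec k i); [lia|reflexivity].
  - rewrite IH by lia. lra.
Qed.

Lemma rsum_delta_l n i f :
  (i < n)%nat -> rsum n (fun k => (if Nat.eqb i k then 1 else 0) * f k) = f i.
Proof.
  intros Hi. rewrite <- (rsum_indicator n i f Hi). apply rsum_ext. intros k _.
  rewrite Nat.eqb_sym. destruct (Nat.eqb k i); lra.
Qed.

Lemma rsum_delta_r n i f :
  (i < n)%nat -> rsum n (fun k => f k * (if Nat.eqb k i then 1 else 0)) = f i.
Proof.
  intros Hi. rewrite <- (rsum_indicator n i f Hi). apply rsum_ext. intros k _.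
  destruct (Nat.eqb k i); lra.
Qed.

Lemma rsum_le n f g : (forall k, (k < n)%nat -> f k <= g k) -> rsum n f <= rsum n g.
Proof.
  induction n as [|n IH]; intros H; simpl; [lra|].
  pose proof (H n ltac:(lia)). pose proof (IH ltac:(intros; apply H; lia)). lra.
Qed.

Lemma rsum_nonneg n f : (forall k, (k < n)%nat -> 0 <= f k) -> 0 <= rsum n f.
Proof.
  intros H. rewrite <- (rsum_eq0 n (fun _ => 0)) by reflexivity. apply rsum_le, H.
Qed.

Lemma rsum_ge_term n f i :
  (forall k, (k < n)%nat -> 0 <= f k) -> (i < n)%nat -> f i <= rsum n f.
Proof.
  intros H Hi. rewrite <- (rsum_indicator n i f Hi) at 1.
  apply rsum_le. intros k Hk. destruct (Nat.eqb k i); [lra|apply H, Hk].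
Qed.

Lemma rsum_squares_eq0 n f :
  rsum n (fun k => f k * f k) = 0 -> forall k, (k < n)%nat -> f k = 0.
Proof.
  intros H k Hk.
  pose proof (rsum_ge_term n (fun k => f k * f k) k ltac:(intros; nra) Hk). nra.
Qed.

(** * Vectors and matrices *)

Definition vscal (t : R) (x : vec) : vec := fun i => t * x i.

Lemma dot_ext d x y x' y' :
  (forall i, (i < d)%nat -> x i = x' i) -> (forall i, (i < d)%nat -> y i = y' i) ->
  dot d x y = dot d x' y'.
Proof. intros Hx Hy. apply rsum_ext. intros i Hi. rewrite Hx, Hy by exact Hi. reflexivity. Qed.

Lemma dot_comm d x y : dot d x y = dot d y x.
Proof. apply rsum_ext. intros. ring. Qed.

Lemma dot_addl d x y z : dot d (vadd x y) z = dot d x z + dot d y z.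
Proof. unfold dot, vadd. rewrite <- rsum_add. apply rsum_ext. intros. ring. Qed.

Lemma dot_subl d x y z : dot d (vsub x y) z = dot d x z - dot d y z.
Proof. unfold dot, vsub. rewrite <- rsum_sub. apply rsum_ext. intros. ring. Qed.

Lemma dot_scall d t x y : dot d (vscal t x) y = t * dot d x y.
Proof. unfold dot, vscal. rewrite <- rsum_mult_l. apply rsum_ext. intros. ring. Qed.

Lemma dot_addr d x y z : dot d z (vadd x y) = dot d z x + dot d z y.
Proof. rewrite !(dot_comm d z). apply dot_addl. Qed.

Lemma dot_subr d x y z : dot d z (vsub x y) = dot d z x - dot d z y.
Proof. rewrite !(dot_comm d z). apply dot_subl. Qed.

Lemma dot_scalr d t x y : dot d y (vscal t x) = t * dot d y x.
Proof. rewrite !(dot_comm d y). apply dot_scall. Qed.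

Lemma dot_0l d y : dot d (fun _ => 0) y = 0.
Proof. apply rsum_eq0. intros. ring. Qed.

Lemma dot_self_nonneg d x : 0 <= dot d x x.
Proof. apply rsum_nonneg. intros. nra. Qed.

Lemma mv_add d M x y : mv d M (vadd x y) = vadd (mv d M x) (mv d M y).
Proof.
  extensionality i. unfold mv, vadd. rewrite <- rsum_add. apply rsum_ext. intros. ring.
Qed.

Lemma mv_scal d M t x : mv d M (vscal t x) = vscal t (mv d M x).
Proof.
  extensionality i. unfold mv, vscal. rewrite <- rsum_mult_l. apply rsum_ext. intros. ring.
Qed.

Lemma mv_madd d M N x : mv d (madd M N) x = vadd (mv d M x) (mv d N x).
Proof.
  extensionality i. unfold mv, vadd, madd. rewrite <- rsum_add. apply rsum_ext. intros. ring.
Qed.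

Definition mm (d : nat) (M N : mat) : mat := fun i j => rsum d (fun k => M i k * N k j).

Lemma mm_assoc d L M N i j : mm d (mm d L M) N i j = mm d L (mm d M N) i j.
Proof.
  unfold mm. transitivity (rsum d (fun k => rsum d (fun l => L i l * M l k * N k j))).
  - apply rsum_ext. intros. rewrite <- rsum_mult_r. reflexivity.
  - rewrite rsum_exchange. apply rsum_ext. intros.
    rewrite <- rsum_mult_l. apply rsum_ext. intros. ring.
Qed.

Lemma mv_mv d M N x i : mv d M (mv d N x) i = rsum d (fun k => mm d M N i k * x k).
Proof.
  unfold mv, mm. transitivity (rsum d (fun j => rsum d (fun k => M i j * N j k * x k))).
  - apply rsum_ext. intros. rewrite <- rsum_mult_l. apply rsum_ext. intros. ring.
  - rewrite rsum_exchange. apply rsum_ext. intros. rewrite <- rsum_mult_r. reflexivity.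
Qed.

Lemma mv_inv d M N x i : is_inv d M N -> (i < d)%nat -> mv d M (mv d N x) i = x i.
Proof.
  intros HMN Hi. rewrite mv_mv, <- (rsum_delta_l d i x Hi).
  apply rsum_ext. intros. unfold mm. rewrite HMN; auto.
Qed.

(* The transpose L of N is a left inverse of M, hence L = L (M N) = (L M) N = N. *)
Lemma is_inv_sym d M N :
  symmetric d M -> is_inv d M N -> symmetric d N /\ is_inv d N M.
Proof.
  intros HM HMN. set (L := fun i j => N j i).
  assert (HLM : forall i j, (i < d)%nat -> (j < d)%nat ->
            mm d L M i j = if Nat.eqb i j then 1 else 0).
  { intros i j Hi Hj. unfold mm, L. rewrite Nat.eqb_sym, <- (HMN j i Hj Hi).
    apply rsum_ext. intros. rewrite HM by auto. ring. }
  assert (HLN : forall i j, (i < d)%nat -> (j < d)%nat -> L i j = N i j).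
  { intros i j Hi Hj. transitivity (mm d L (mm d M N) i j).
    - unfold mm at 1. rewrite <- (rsum_delta_r d j (L i) Hj). apply rsum_ext. intros.
      unfold mm. rewrite HMN; auto.
    - rewrite <- mm_assoc. unfold mm at 1. rewrite <- (rsum_delta_l d i (fun k => N k j) Hi).
      apply rsum_ext. intros. fold (mm d L M i k). rewrite HLM; auto. }
  split.
  - intros i j Hi Hj. rewrite <- HLN by auto. reflexivity.
  - intros i j Hi Hj. rewrite <- HLM by auto. apply rsum_ext. intros. rewrite HLN; auto.
Qed.

Lemma quad_sym d M u v : symmetric d M -> dot d u (mv d M v) = dot d v (mv d M u).
Proof.
  intros HM. unfold dot, mv.
  transitivity (rsum d (fun i => rsum d (fun j => u i * M i j * v j))).
  - apply rsum_ext. intros. rewrite <- rsum_mult_l. apply rsum_ext. intros. ring.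
  - rewrite rsum_exchange. apply rsum_ext. intros. rewrite <- rsum_mult_l.
    apply rsum_ext. intros. rewrite HM by auto. ring.
Qed.

Definition psd (d : nat) (M : mat) : Prop := forall x, 0 <= dot d x (mv d M x).

Lemma posdef_psd d M : posdef d M -> psd d M.
Proof.
  intros HM x. destruct (classic (exists i, (i < d)%nat /\ x i <> 0)) as [Hx|Hx].
  - apply Rlt_le, HM, Hx.
  - right. symmetry. apply rsum_eq0. intros k Hk.
    destruct (Req_dec (x k) 0) as [->|Hxk]; [ring|]. exfalso. eauto.
Qed.

Lemma psd_inv d M N : psd d M -> is_inv d M N -> psd d N.
Proof.
  intros HM HMN x. set (u := mv d N x).
  rewrite (dot_ext d x u (mv d M u) u); [rewrite dot_comm; apply HM| |reflexivity].
  intros i Hi. symmetry. apply mv_inv; auto.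
Qed.

Lemma psd_madd d M N : psd d M -> psd d N -> psd d (madd M N).
Proof. intros HM HN x. rewrite mv_madd, dot_addr. pose proof (HM x). pose proof (HN x). lra. Qed.

Lemma symmetric_madd d M N : symmetric d M -> symmetric d N -> symmetric d (madd M N).
Proof. intros HM HN i j Hi Hj. unfold madd. rewrite HM, HN by auto. reflexivity. Qed.

Lemma discriminant_nonpos a b c :
  0 <= c -> (forall t, 0 <= a + 2 * t * b + t * t * c) -> b * b <= a * c.
Proof.
  intros Hc Hq. destruct (Req_dec c 0) as [->|Hc0].
  - destruct (Req_dec b 0) as [->|Hb]; [lra|]. exfalso.
    specialize (Hq (- (a + 1) / (2 * b))).
    replace (a + 2 * (- (a + 1) / (2 * b)) * b + - (a + 1) / (2 * b) * (- (a + 1) / (2 * b)) * 0)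
      with (-1) in Hq by (field; exact Hb). lra.
  - specialize (Hq (- b / c)).
    replace (a + 2 * (- b / c) * b + - b / c * (- b / c) * c) with ((a * c - b * b) / c) in Hq
      by (field; exact Hc0).
    assert (Hdiv : a * c - b * b = (a * c - b * b) / c * c) by (field; exact Hc0). nra.
Qed.

Lemma cauchy_schwarz d M u v : symmetric d M -> psd d M ->
  dot d u (mv d M v) * dot d u (mv d M v) <= dot d u (mv d M u) * dot d v (mv d M v).
Proof.
  intros HM HMp. apply discriminant_nonpos; [apply HMp|]. intros t.
  pose proof (HMp (vadd u (vscal t v))) as H.
  rewrite mv_add, mv_scal, !dot_addl, !dot_addr, !dot_scall, !dot_scalr, (quad_sym d M v u HM) in H.
  lra.
Qed.

(** * Sequences *)

Lemma Un_cv_const c : Un_cv (fun _ => c) c.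
Proof. intros e He. exists O. intros n _. unfold Rdist. rewrite Rminus_diag, Rabs_R0. exact He. Qed.

Lemma Un_cv_rsum n (f : nat -> nat -> R) g :
  (forall k, (k < n)%nat -> Un_cv (fun m => f k m) (g k)) ->
  Un_cv (fun m => rsum n (fun k => f k m)) (rsum n g).
Proof.
  induction n as [|n IH]; intros H; simpl; [apply Un_cv_const|].
  apply CV_plus; [apply IH; intros; apply H; lia|apply H; lia].
Qed.

Definition cvv (d : nat) (x : nat -> vec) (l : vec) : Prop :=
  forall i, (i < d)%nat -> Un_cv (fun m => x m i) (l i).

Lemma cvv_const d v : cvv d (fun _ => v) v.
Proof. intros i _. apply Un_cv_const. Qed.

Lemma cvv_sub d x lx y ly : cvv d x lx -> cvv d y ly -> cvv d (fun m => vsub (x m) (y m)) (vsub lx ly).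
Proof. intros Hx Hy i Hi. apply CV_minus; auto. Qed.

Lemma cvv_mv d M x lx : cvv d x lx -> cvv d (fun m => mv d M (x m)) (mv d M lx).
Proof.
  intros Hx i Hi. apply (Un_cv_rsum d (fun k m => M i k * x m k)).
  intros. apply CV_mult; [apply Un_cv_const|auto].
Qed.

Lemma Un_cv_dot d x lx y ly : cvv d x lx -> cvv d y ly ->
  Un_cv (fun m => dot d (x m) (y m)) (dot d lx ly).
Proof. intros Hx Hy. apply (Un_cv_rsum d (fun k m => x m k * y m k)). intros. apply CV_mult; auto. Qed.

Definition strictly_increasing (phi : nat -> nat) : Prop := forall m, (phi m < phi (S m))%nat.

Lemma strictly_increasing_lt phi m n :
  strictly_increasing phi -> (m < n)%nat -> (phi m < phi n)%nat.
Proof.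
  intros Hphi Hmn. induction Hmn as [|n _ IH]; [apply Hphi|].
  specialize (Hphi n). lia.
Qed.

Lemma strictly_increasing_ge phi m : strictly_increasing phi -> (m <= phi m)%nat.
Proof. intros Hphi. induction m as [|m IH]; [lia|]. specialize (Hphi m). lia. Qed.

Lemma strictly_increasing_comp phi psi :
  strictly_increasing phi -> strictly_increasing psi -> strictly_increasing (fun m => phi (psi m)).
Proof. intros Hphi Hpsi m. apply strictly_increasing_lt; auto. Qed.

Lemma Un_cv_subseq u l phi :
  Un_cv u l -> strictly_increasing phi -> Un_cv (fun m => u (phi m)) l.
Proof.
  intros Hu Hphi e He. destruct (Hu e He) as [N HN]. exists N. intros m Hm.
  apply HN. pose proof (strictly_increasing_ge phi m Hphi). lia.
Qed.

(* From a cluster value [l] (Stdlib's Bolzano-Weierstrass), pick indices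
   [phi (S k) > phi k] with [|u (phi k) - l| < 1 / (k + 1)]. *)
Lemma bounded_cv_subseq (u : nat -> R) B :
  (forall m, Rabs (u m) <= B) ->
  exists phi l, strictly_increasing phi /\ Un_cv (fun m => u (phi m)) l.
Proof.
  intros HB.
  destruct (Bolzano_Weierstrass u (fun x => - B <= x <= B) (compact_P3 (- B) B)) as [l Hl].
  { intros m. specialize (HB m). pose proof (Rle_abs (u m)). pose proof (Rle_abs (- u m)).
    rewrite Rabs_Ropp in *. lra. }
  assert (Hclose : forall Nk : nat * nat, exists p,
             (fst Nk <= p)%nat /\ Rabs (u p - l) < / (INR (snd Nk) + 1)).
  { intros [N k]. apply (Hl (disc l (RinvN k)) N). exists (RinvN k). intros y Hy. exact Hy. }
  destruct (choice _ Hclose) as [g Hg].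
  set (phi := fix phi k := match k with O => g (O, O) | S k' => g (S (phi k'), S k') end).
  assert (Hphi : forall k, Rabs (u (phi k) - l) < / (INR k + 1)).
  { intros [|k]; [exact (proj2 (Hg (O, O)))|exact (proj2 (Hg (S (phi k), S k)))]. }
  exists phi, l. split.
  - intros m. exact (proj1 (Hg (S (phi m), S m))).
  - intros e He. destruct (RinvN_cv He) as [N HN]. exists N. intros m Hm.
    specialize (HN m Hm). specialize (Hphi m). unfold Rdist in *. simpl in HN.
    rewrite Rminus_0_r, Rabs_pos_eq in HN; [lra|].
    left. apply Rinv_0_lt_compat. pose proof (pos_INR m). lra.
Qed.

Lemma bounded_cv_subseq_list {I : Type} (L : list I) (u : I -> nat -> R) :
  (forall j, In j L -> exists B, forall m, Rabs (u j m) <= B) ->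
  exists phi (lim : I -> R), strictly_increasing phi /\
    forall j, In j L -> Un_cv (fun m => u j (phi m)) (lim j).
Proof.
  induction L as [|j0 L IH]; intros HB.
  - exists (fun m => m), (fun _ => 0). split; [intros m; lia|intros j []].
  - destruct IH as [phi [lim [Hphi Hlim]]]; [intros; apply HB; simpl; auto|].
    destruct (HB j0 (or_introl eq_refl)) as [B Hj0].
    destruct (bounded_cv_subseq (fun m => u j0 (phi m)) B) as [psi [l [Hpsi Hl]]];
      [intros; apply Hj0|].
    exists (fun m => phi (psi m)),
      (fun j => if excluded_middle_informative (j = j0) then l else lim j).
    split; [apply strictly_increasing_comp; auto|].
    intros j Hj. destruct (excluded_middle_informative (j = j0)) as [->|Hne]; [exact Hl|].
    destruct Hj as [Hj|Hj]; [congruence|].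
    apply (Un_cv_subseq (fun m => u j (phi m))); auto.
Qed.

(** * Ellipsoids *)

Lemma Mnorm_sqr d M v : psd d M -> Mnorm d M v * Mnorm d M v = dot d v (mv d M v).
Proof. intros HM. apply sqrt_sqrt, HM. Qed.

Lemma Mnorm_nonneg d M v : 0 <= Mnorm d M v.
Proof. apply sqrt_pos. Qed.

Lemma Mnorm_0 d M : Mnorm d M (fun _ => 0) = 0.
Proof. unfold Mnorm. rewrite dot_0l. apply sqrt_0. Qed.

Lemma Mnorm_cauchy_schwarz d M u v : symmetric d M -> psd d M ->
  dot d u (mv d M v) <= Mnorm d M u * Mnorm d M v.
Proof.
  intros HM HMp. pose proof (cauchy_schwarz d M u v HM HMp) as H.
  rewrite <- (Mnorm_sqr d M u HMp), <- (Mnorm_sqr d M v HMp) in H.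
  pose proof (Rmult_le_pos _ _ (Mnorm_nonneg d M u) (Mnorm_nonneg d M v)).
  set (p := Mnorm d M u * Mnorm d M v) in *. set (b := dot d u (mv d M v)) in *.
  replace (Mnorm d M u * Mnorm d M u * (Mnorm d M v * Mnorm d M v)) with (p * p) in H
    by (unfold p; ring).
  nra.
Qed.

Definition ellipsoid (d : nat) (M : mat) (center : vec) (r : R) (z : vec) : Prop :=
  dot d (vsub z center) (mv d M (vsub z center)) <= r * r.

Lemma Mnorm_le_ellipsoid d M center r z : psd d M -> 0 <= r ->
  Mnorm d M (vsub z center) <= r <-> ellipsoid d M center r z.
Proof.
  intros HM Hr. unfold ellipsoid. rewrite <- (Mnorm_sqr d M _ HM).
  pose proof (Mnorm_nonneg d M (vsub z center)). split; intros; nra.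
Qed.

(* By Cauchy-Schwarz for the form [Ai], the maximum of [<z, w>] over the ellipsoid
   is attained at [center + (r / |w|_A) A w]. *)
Lemma ellipsoid_support d A Ai center w r :
  symmetric d A -> psd d A -> is_inv d A Ai -> 0 <= r ->
  is_max (fun v => exists z, Mnorm d Ai (vsub z center) <= r /\ v = dot d z w)
         (dot d center w + r * Mnorm d A w).
Proof.
  intros HA HAp HAAi Hr. destruct (is_inv_sym d A Ai HA HAAi) as [HAi HAiA].
  assert (HAw : dot d (mv d A w) (mv d Ai (mv d A w)) = dot d w (mv d A w)).
  { rewrite dot_comm. apply dot_ext; [intros; apply mv_inv; auto|reflexivity]. }
  assert (HnormAw : Mnorm d Ai (mv d A w) = Mnorm d A w) by (unfold Mnorm; rewrite HAw; reflexivity).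
  set (n := Mnorm d A w) in *. split.
  - destruct (Req_dec n 0) as [Hn|Hn].
    + exists center. replace (vsub center center) with (fun _ : nat => 0)
        by (extensionality i; unfold vsub; ring).
      rewrite Mnorm_0, Hn. split; [exact Hr|ring].
    + assert (Hnpos : 0 < n) by (pose proof (Mnorm_nonneg d A w); fold n in H; lra).
      assert (Hn2 : dot d w (mv d A w) = n * n) by (symmetry; apply Mnorm_sqr; auto).
      exists (vadd center (vscal (r / n) (mv d A w))).
      replace (vsub (vadd center (vscal (r / n) (mv d A w))) center) with (vscal (r / n) (mv d A w))
        by (extensionality i; unfold vsub, vadd, vscal; ring).
      split.
      * right. unfold Mnorm. rewrite mv_scal, dot_scall, dot_scalr, HAw, Hn2.
        replace (r / n * (r / n * (n * n))) with (r * r) by (field; lra). apply sqrt_square, Hr.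
      * rewrite dot_addl, dot_scall, (dot_comm d (mv d A w)), Hn2. field. lra.
  - intros v [z [Hz ->]].
    replace z with (vadd center (vsub z center)) at 1 by (extensionality i; unfold vadd, vsub; ring).
    rewrite dot_addl. apply Rplus_le_compat_l.
    rewrite (dot_ext d (vsub z center) w (vsub z center) (mv d Ai (mv d A w)));
      [|reflexivity|intros; symmetry; apply mv_inv; auto].
    eapply Rle_trans; [apply Mnorm_cauchy_schwarz; auto; apply (psd_inv d A); auto|].
    rewrite HnormAw. apply Rmult_le_compat_r; [apply Mnorm_nonneg|exact Hz].
Qed.

Definition convex_set (S : vec -> Prop) : Prop :=
  forall x y t, S x -> S y -> 0 <= t <= 1 -> S (fun i => (1 - t) * x i + t * y i).

Lemma ellipsoid_center d M center r : 0 <= r -> ellipsoid d M center r center.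
Proof.
  intros Hr. unfold ellipsoid. replace (vsub center center) with (fun _ : nat => 0)
    by (extensionality i; unfold vsub; ring).
  rewrite dot_0l. nra.
Qed.

Lemma ellipsoid_convex d M center r : symmetric d M -> psd d M -> 0 <= r ->
  convex_set (ellipsoid d M center r).
Proof.
  intros HM HMp Hr x y t Hx Hy Ht. unfold ellipsoid in *.
  set (u := vsub x center) in *. set (v := vsub y center) in *.
  replace (vsub (fun i => (1 - t) * x i + t * y i) center) with (vadd (vscal (1 - t) u) (vscal t v))
    by (extensionality i; unfold u, v, vsub, vadd, vscal; ring).
  rewrite mv_add, !mv_scal, !dot_addl, !dot_addr, !dot_scall, !dot_scalr, (quad_sym d M v u HM).
  pose proof (cauchy_schwarz d M u v HM HMp) as HCS.
  pose proof (HMp u). pose proof (HMp v).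
  set (qu := dot d u (mv d M u)) in *. set (qv := dot d v (mv d M v)) in *.
  set (b := dot d u (mv d M v)) in *.
  assert (Hb : b <= r * r) by nra.
  assert ((1 - t) * (1 - t) * qu <= (1 - t) * (1 - t) * (r * r)) by (apply Rmult_le_compat_l; nra).
  assert (t * t * qv <= t * t * (r * r)) by (apply Rmult_le_compat_l; nra).
  assert ((1 - t) * t * b <= (1 - t) * t * (r * r)) by (apply Rmult_le_compat_l; nra).
  nra.
Qed.

Lemma ellipsoid_closed d M center r x l :
  cvv d x l -> (forall m, ellipsoid d M center r (x m)) -> ellipsoid d M center r l.
Proof.
  intros Hx Hin. unfold ellipsoid.
  assert (Hc : cvv d (fun m => vsub (x m) center) (vsub l center)) by (apply cvv_sub; [exact Hx|apply cvv_const]).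
  exact (Rle_cv_lim Hin (Un_cv_dot _ _ _ _ _ Hc (cvv_mv _ _ _ _ Hc)) (Un_cv_const _)).
Qed.

(* The i-th coordinate is [<z - center, Ai (A e_i)>], bounded via Cauchy-Schwarz for [Ai]. *)
Lemma ellipsoid_bounded d A Ai center r i : symmetric d A -> psd d A -> is_inv d A Ai -> (i < d)%nat ->
  exists B, forall z, ellipsoid d Ai center r z -> Rabs (z i) <= B.
Proof.
  intros HA HAp HAAi Hi. destruct (is_inv_sym d A Ai HA HAAi) as [HAi HAiA].
  pose proof (psd_inv d A Ai HAp HAAi) as HAip.
  set (ei := fun k => if Nat.eqb k i then 1 else 0).
  set (q := dot d (mv d A ei) (mv d Ai (mv d A ei))).
  exists (Rabs (center i) + (r * r * q + 1)). intros z Hz. unfold ellipsoid in Hz.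
  set (v := vsub z center) in *.
  assert (Hv : v i = dot d v (mv d Ai (mv d A ei))).
  { rewrite (dot_ext d v (mv d Ai (mv d A ei)) v ei); [|reflexivity|intros; apply mv_inv; auto].
    symmetry. apply rsum_delta_r, Hi. }
  pose proof (cauchy_schwarz d Ai v (mv d A ei) HAi HAip) as HCS. rewrite <- Hv in HCS. fold q in HCS.
  assert (Hq : 0 <= q) by apply HAip.
  assert (Hvv : 0 <= dot d v (mv d Ai v)) by apply HAip.
  assert (Hvi : Rabs (v i) * Rabs (v i) <= r * r * q)
    by (rewrite <- Rabs_mult, Rabs_pos_eq; nra).
  assert (Rabs (v i) <= r * r * q + 1) by (pose proof (Rabs_pos (v i)); nra).
  replace (z i) with (center i + v i) by (unfold v, vsub; ring).
  eapply Rle_trans; [apply Rabs_triang|]. lra.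
Qed.

(** * Separating a point from the convex hull of finitely many convex compact sets *)

Definition dist2 (d : nat) (x y : vec) : R := dot d (vsub x y) (vsub x y).

Lemma inf_approx {X : Type} (P : X -> Prop) (f : X -> R) :
  (exists x, P x) -> (forall x, P x -> 0 <= f x) ->
  exists D, (forall x, P x -> D <= f x) /\
    forall m : nat, exists x, P x /\ f x < D + / (INR m + 1).
Proof.
  intros [x0 Hx0] Hf.
  set (E := fun v => exists x, P x /\ v = - f x).
  destruct (completeness E) as [M [HMub HMlub]].
  { exists 0. intros v [x [Hx ->]]. specialize (Hf x Hx). lra. }
  { exists (- f x0), x0. split; [exact Hx0|reflexivity]. }
  exists (- M). split.
  - intros x Hx. assert (E (- f x)) as HE by (exists x; auto). specialize (HMub _ HE). lra.
  - intros m. assert (Heps : 0 < / (INR m + 1)) by (apply Rinv_0_lt_compat; pose proof (pos_INR m); lra).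
    apply NNPP. intros Hnone. assert (M <= M - / (INR m + 1)); [|lra].
    apply HMlub. intros v [x [Hx ->]].
    destruct (Rle_or_lt (- f x) (M - / (INR m + 1))) as [Hle|Hlt]; [exact Hle|].
    exfalso. apply Hnone. exists x. split; [exact Hx|lra].
Qed.

(* Otherwise the step [t = <e,f> / (|f|^2 + 2 <e,f>)], with [e = T - s] and [f = x - s],
   would get strictly closer to [T]. *)
Lemma nearest_point_obtuse d T s x :
  (forall t, 0 < t < 1 -> dist2 d T s <= dist2 d T (fun i => s i + t * (x i - s i))) ->
  dot d (vsub T s) (vsub x s) <= 0.
Proof.
  intros Hmin. set (e := vsub T s). set (f := vsub x s).
  assert (Hexpand : forall t, dist2 d T (fun i => s i + t * (x i - s i))
                     = dot d e e - 2 * t * dot d e f + t * t * dot d f f).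
  { intros t. unfold dist2.
    replace (vsub T (fun i => s i + t * (x i - s i))) with (vsub e (vscal t f))
      by (extensionality i; unfold e, f, vsub, vscal; ring).
    rewrite !dot_subl, !dot_subr, !dot_scall, !dot_scalr, (dot_comm d f e). ring. }
  destruct (Rle_or_lt (dot d e f) 0) as [Hle|Hpos]; [exact Hle|exfalso].
  pose proof (dot_self_nonneg d f) as Hff.
  set (ef := dot d e f) in *. set (ff := dot d f f) in *.
  set (t := ef / (ff + 2 * ef)).
  assert (Ht : t * (ff + 2 * ef) = ef) by (unfold t; field; lra).
  assert (Htpos : 0 < t) by (unfold t; apply Rdiv_lt_0_compat; lra).
  assert (Ht1 : t < 1) by nra.
  specialize (Hmin t (conj Htpos Ht1)). rewrite Hexpand in Hmin. unfold dist2 in Hmin. fold e in Hmin.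
  nra.
Qed.

Section HullOfUnion.

Variables (d n : nat) (S : nat -> vec -> Prop).
Hypothesis n_pos : (0 < n)%nat.
Hypothesis S_nonempty : forall a, (a < n)%nat -> exists z, S a z.
Hypothesis S_convex : forall a, (a < n)%nat -> convex_set (S a).
Hypothesis S_closed : forall a x l, (a < n)%nat -> cvv d x l -> (forall m, S a (x m)) -> S a l.
Hypothesis S_bounded : forall a i, (a < n)%nat -> (i < d)%nat ->
  exists B, forall z, S a z -> Rabs (z i) <= B.

(* Every point of the hull is [sum_a mu_a z_a] with [mu] a probability vector and
   one point [z_a] of each [S a]: the convexity of the [S a] absorbs repeated indices. *)
Definition hull_param (mu : nat -> R) (z : nat -> vec) : Prop :=
  (forall a, (a < n)%nat -> 0 <= mu a /\ S a (z a)) /\ rsum n mu = 1.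

Definition hull_point (mu : nat -> R) (z : nat -> vec) : vec :=
  fun i => rsum n (fun a => mu a * z a i).

Lemma hull_point_conv mu z :
  hull_param mu z -> conv d (fun x => exists a, (a < n)%nat /\ S a x) (hull_point mu z).
Proof.
  intros [Hmuz Hsum]. exists n, mu, z. split; [|split; [exact Hsum|reflexivity]].
  intros k Hk. destruct (Hmuz k Hk) as [Hmu Hz]. split; [exact Hmu|exists k; split; assumption].
Qed.

Lemma hull_param_exists : exists mu z, hull_param mu z.
Proof.
  assert (Hz : forall a, exists x, (a < n)%nat -> S a x).
  { intros a. destruct (Nat.ltb_spec a n) as [Ha|Ha].
    - destruct (S_nonempty a Ha) as [x Hx]. exists x. intros _. exact Hx.
    - exists (fun _ => 0). intros Ha'. lia. }
  destruct (choice _ Hz) as [z Hz'].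
  exists (fun a => if Nat.eqb a 0 then 1 else 0), z. split.
  - intros a Ha. split; [destruct (Nat.eqb a 0); lra|apply Hz', Ha].
  - exact (rsum_indicator n 0 (fun _ => 1) n_pos).
Qed.

(* Move the weight [t] onto slot [a], merging [x] with [z a] inside [S a]. *)
Lemma hull_param_segment mu z a x t :
  hull_param mu z -> (a < n)%nat -> S a x -> 0 < t < 1 ->
  exists mu' z', hull_param mu' z' /\
    forall i, hull_point mu' z' i = hull_point mu z i + t * (x i - hull_point mu z i).
Proof.
  intros [Hmuz Hsum] Ha Hx Ht. destruct (Hmuz a Ha) as [Hmua Hza].
  set (w := (1 - t) * mu a + t). assert (Hw : 0 < w) by (unfold w; nra).
  exists (fun b => (1 - t) * mu b + t * (if Nat.eqb b a then 1 else 0)).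
  exists (fun b => if Nat.eqb b a then (fun i => (1 - t / w) * z a i + t / w * x i) else z b).
  split; [split|].
  - intros b Hb. destruct (Hmuz b Hb) as [Hmub Hzb].
    destruct (Nat.eqb_spec b a) as [->|Hne]; split; try nra; try exact Hzb.
    apply (S_convex a Ha); auto. split.
    + apply Rlt_le, Rdiv_lt_0_compat; lra.
    + apply (Rmult_le_reg_r w); [exact Hw|]. unfold Rdiv. rewrite Rmult_assoc, Rinv_l by lra.
      unfold w. nra.
  - rewrite rsum_add, rsum_mult_l, rsum_mult_l, Hsum, (rsum_indicator n a (fun _ => 1) Ha). ring.
  - intros i. unfold hull_point.
    rewrite (rsum_ext n _ (fun b => (1 - t) * (mu b * z b i) + (if Nat.eqb b a then t * x i else 0))).
    + rewrite rsum_add, rsum_mult_l, (rsum_indicator n a (fun _ => t * x i) Ha). ring.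
    + intros b _. destruct (Nat.eqb_spec b a) as [->|_]; [|ring].
      unfold w in *. field. lra.
Qed.

Lemma hull_params_cv_subseq (P : nat -> (nat -> R) * (nat -> vec)) :
  (forall m, hull_param (fst (P m)) (snd (P m))) ->
  exists phi mu z, strictly_increasing phi /\ hull_param mu z /\
    cvv d (fun m => hull_point (fst (P (phi m))) (snd (P (phi m)))) (hull_point mu z).
Proof.
  intros HP.
  set (L := map (@inl nat (nat * nat)) (seq 0 n)
            ++ map (@inr nat (nat * nat)) (list_prod (seq 0 n) (seq 0 d))).
  set (u := fun (j : nat + nat * nat) m =>
              match j with inl a => fst (P m) a | inr (a, i) => snd (P m) a i end).
  destruct (bounded_cv_subseq_list L u) as [phi [lim [Hphi Hlim]]].
  { intros j Hj. apply in_app_or in Hj.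
    destruct Hj as [Hj|Hj]; apply in_map_iff in Hj; destruct Hj as [x [<- Hx]].
    - apply in_seq in Hx. exists 1. intros m. destruct (HP m) as [Hm Hsum]. simpl.
      rewrite Rabs_pos_eq by apply (Hm x ltac:(lia)). rewrite <- Hsum.
      apply rsum_ge_term; [intros k Hk; apply Hm, Hk|lia].
    - destruct x as [a i]. apply in_prod_iff in Hx. destruct Hx as [Ha Hi]. apply in_seq in Ha, Hi.
      destruct (S_bounded a i ltac:(lia) ltac:(lia)) as [B HB]. exists B. intros m.
      apply HB, (HP m). lia. }
  set (mu := fun a => lim (inl a)). set (z := fun a i => lim (inr (a, i))).
  assert (Hmu : forall a, (a < n)%nat -> Un_cv (fun m => fst (P (phi m)) a) (mu a)).
  { intros a Ha. apply (Hlim (inl a)), in_or_app. left. apply in_map, in_seq. lia. }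
  assert (Hz : forall a, (a < n)%nat -> cvv d (fun m => snd (P (phi m)) a) (z a)).
  { intros a Ha i Hi. apply (Hlim (inr (a, i))), in_or_app. right.
    apply in_map, in_prod; apply in_seq; lia. }
  exists phi, mu, z. split; [exact Hphi|split; [split|]].
  - intros a Ha. split.
    + apply (Rle_cv_lim (Un := fun _ => 0) (Vn := fun m => fst (P (phi m)) a));
        [intros m; apply (HP (phi m)), Ha|apply Un_cv_const|apply Hmu, Ha].
    + apply (S_closed a (fun m => snd (P (phi m)) a)); [exact Ha|apply Hz, Ha|].
      intros m. apply (HP (phi m)), Ha.
  - apply (UL_sequence (fun m => rsum n (fst (P (phi m))))).
    + apply (Un_cv_rsum n (fun k m => fst (P (phi m)) k)). exact Hmu.
    + apply (Un_cv_ext (fun _ => 1)); [intros m; symmetry; apply (HP (phi m))|apply Un_cv_const].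
  - intros i Hi. apply (Un_cv_rsum n (fun a m => fst (P (phi m)) a * snd (P (phi m)) a i)).
    intros a Ha. apply CV_mult; [apply Hmu, Ha|apply Hz; auto].
Qed.

Lemma hull_nearest_point (T : vec) : exists mu z, hull_param mu z /\
  forall mu' z', hull_param mu' z' -> dist2 d T (hull_point mu z) <= dist2 d T (hull_point mu' z').
Proof.
  destruct (inf_approx (fun p : (nat -> R) * (nat -> vec) => hull_param (fst p) (snd p))
              (fun p => dist2 d T (hull_point (fst p) (snd p)))) as [D [HD Happrox]].
  { destruct hull_param_exists as [mu [z Hmuz]]. exists (mu, z). exact Hmuz. }
  { intros p _. apply dot_self_nonneg. }
  destruct (choice _ Happrox) as [P HP].
  destruct (hull_params_cv_subseq P (fun m => proj1 (HP m))) as [phi [mu [z [Hphi [Hmuz Hcv]]]]].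
  exists mu, z. split; [exact Hmuz|]. intros mu' z' Hmuz'.
  apply Rle_trans with D; [|exact (HD (mu', z') Hmuz')].
  assert (Hs := cvv_sub d _ _ _ _ (cvv_const d T) Hcv).
  assert (Hbound : forall m, dist2 d T (hull_point (fst (P (phi m))) (snd (P (phi m))))
                             <= D + / (INR m + 1)).
  { intros m. apply Rlt_le. eapply Rlt_le_trans; [exact (proj2 (HP (phi m)))|].
    apply Rplus_le_compat_l, Rinv_le_contravar; [pose proof (pos_INR m); lra|].
    apply Rplus_le_compat_r, le_INR, strictly_increasing_ge, Hphi. }
  pose proof (Rle_cv_lim Hbound (Un_cv_dot d _ _ _ _ Hs Hs)
                (CV_plus _ _ _ _ (Un_cv_const D) RinvN_cv)).
  unfold dist2. lra.
Qed.

Theorem hull_separation (T : vec) :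
  ~ conv d (fun x => exists a, (a < n)%nat /\ S a x) T ->
  exists e, 0 < dot d e e /\
    forall a x, (a < n)%nat -> S a x -> dot d e x <= dot d e T - dot d e e.
Proof.
  intros Hout. destruct (hull_nearest_point T) as [mu [z [Hmuz Hmin]]].
  set (s := hull_point mu z). set (e := vsub T s). exists e. split.
  - destruct (Rlt_or_le 0 (dot d e e)) as [Hpos|Hle]; [exact Hpos|exfalso].
    assert (He0 := rsum_squares_eq0 d e (Rle_antisym _ _ Hle (dot_self_nonneg d e))).
    destruct (hull_point_conv mu z Hmuz) as [k [lam [p [Hp [Hsum Hs]]]]].
    apply Hout. exists k, lam, p. split; [exact Hp|split; [exact Hsum|]].
    intros i Hi. rewrite <- Hs by exact Hi. specialize (He0 i Hi). unfold e, vsub in He0. fold s. lra.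
  - intros a x Ha Hx.
    assert (Hobtuse : dot d e (vsub x s) <= 0).
    { apply nearest_point_obtuse. intros t Ht.
      destruct (hull_param_segment mu z a x t Hmuz Ha Hx Ht) as [mu' [z' [Hmuz' Hpt]]].
      replace (fun i => s i + t * (x i - s i)) with (hull_point mu' z')
        by (extensionality i; apply Hpt).
      apply Hmin, Hmuz'. }
    assert (Hee : dot d e e = dot d e T - dot d e s) by (unfold e at 2; apply dot_subr).
    rewrite dot_subr in Hobtuse. lra.
Qed.

End HullOfUnion.

(** * The attacker's feasibility problem *)

Lemma conv_mono d (S S' : vec -> Prop) x : (forall z, S z -> S' z) -> conv d S x -> conv d S' x.
Proof.
  intros HSS' [n [lam [p [Hp [Hsum Hx]]]]]. exists n, lam, p. split; [|split; assumption].
  intros k Hk. destruct (Hp k Hk) as [Hl HS]. split; [exact Hl|apply HSS', HS].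
Qed.

Lemma conv_halfspace d (S : vec -> Prop) w b x :
  (forall z, S z -> dot d w z <= b) -> conv d S x -> dot d w x <= b.
Proof.
  intros Hb [n [lam [p [Hp [Hsum Hx]]]]].
  rewrite (dot_ext d w x w (fun i => rsum n (fun k => lam k * p k i))) by auto.
  transitivity (rsum n (fun k => lam k * dot d w (p k))).
  - right. unfold dot.
    rewrite (rsum_ext d _ (fun i => rsum n (fun k => lam k * (w i * p k i))))
      by (intros; rewrite <- rsum_mult_l; apply rsum_ext; intros; ring).
    rewrite rsum_exchange. apply rsum_ext. intros. apply rsum_mult_l.
  - apply Rle_trans with (rsum n (fun k => lam k * b)).
    + apply rsum_le. intros k Hk. destruct (Hp k Hk) as [Hl HS].
      apply Rmult_le_compat_l; [exact Hl|apply Hb, HS].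
    + rewrite rsum_mult_r, Hsum. lra.
Qed.

Lemma is_max_unique (S : R -> Prop) m1 m2 : is_max S m1 -> is_max S m2 -> m1 = m2.
Proof. intros [H1 H1'] [H2 H2']. apply Rle_antisym; auto. Qed.

Lemma inv_spd d M N : symmetric d M -> psd d M -> is_inv d M N -> symmetric d N /\ psd d N.
Proof. intros HM HMp HMN. split; [apply (is_inv_sym d M N HM HMN)|apply (psd_inv d M N HMp HMN)]. Qed.

Section Feasibility.

Variables (d K adag : nat) (A Ai : nat -> mat) (theta : nat -> vec) (r xi : R).
Hypothesis K_ge2 : (2 <= K)%nat.
Hypothesis adag_lt : (adag < K)%nat.
Hypothesis r_nonneg : 0 <= r.
Hypothesis xi_pos : 0 < xi.
Hypothesis A_spd : forall a, (a < K)%nat -> a <> adag ->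
  symmetric d (A a) /\ psd d (A a) /\ is_inv d (A a) (Ai a).

Lemma feasible_not_in_hull :
  (exists w, forall a, (a < K)%nat -> a <> adag ->
     dot d w (vsub (theta adag) (theta a)) - xi >= r * Mnorm d (A a) w) ->
  ~ conv d (fun z => exists a, (a < K)%nat /\ a <> adag /\ Mnorm d (Ai a) (vsub z (theta a)) <= r)
       (theta adag).
Proof.
  intros [w Hw] Hconv.
  apply (conv_halfspace d _ w (dot d w (theta adag) - xi)) in Hconv; [lra|].
  intros z [a [Ha [Hna Hz]]]. destruct (A_spd a Ha Hna) as [HS [HP HI]].
  pose proof (proj2 (ellipsoid_support d (A a) (Ai a) (theta a) w r HS HP HI r_nonneg)
                (dot d z w) (ex_intro _ z (conj Hz eq_refl))).
  specialize (Hw a Ha Hna). rewrite dot_subr, (dot_comm d w (theta a)) in Hw.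
  rewrite dot_comm. lra.
Qed.

Let Ai_spd a : (a < K)%nat -> a <> adag -> symmetric d (Ai a) /\ psd d (Ai a).
Proof. intros Ha Hna. destruct (A_spd a Ha Hna) as [HS [HP HI]]. apply (inv_spd d (A a)); auto. Qed.

(* The hull lemmas want one set per index [b < K]: slot [adag] is filled with a
   duplicate of another arm [a0], which leaves the hull unchanged. *)
Lemma ellipsoids_separation :
  ~ conv d (fun z => exists a, (a < K)%nat /\ a <> adag /\ Mnorm d (Ai a) (vsub z (theta a)) <= r)
       (theta adag) ->
  exists e, 0 < dot d e e /\ forall a z, (a < K)%nat -> a <> adag ->
    Mnorm d (Ai a) (vsub z (theta a)) <= r -> dot d e z <= dot d e (theta adag) - dot d e e.
Proof.
  intros Hout.
  set (a0 := if Nat.eqb adag 0 then 1%nat else 0%nat).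
  set (slot := fun b => if Nat.eqb b adag then a0 else b).
  assert (Hslot : forall b, (b < K)%nat -> (slot b < K)%nat /\ slot b <> adag).
  { intros b Hb. unfold slot, a0.
    destruct (Nat.eqb_spec b adag); [destruct (Nat.eqb_spec adag 0)|]; lia. }
  set (S := fun b => ellipsoid d (Ai (slot b)) (theta (slot b)) r).
  destruct (hull_separation d K S ltac:(lia)) with (T := theta adag) as [e [He Hsep]].
  - intros b Hb. exists (theta (slot b)). apply ellipsoid_center, r_nonneg.
  - intros b Hb. destruct (Hslot b Hb) as [Hs Hns]. destruct (Ai_spd _ Hs Hns).
    apply ellipsoid_convex; auto.
  - intros b x l _. apply ellipsoid_closed.
  - intros b i Hb Hi. destruct (Hslot b Hb) as [Hs Hns]. destruct (A_spd _ Hs Hns) as [HS [HP HI]].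
    apply (ellipsoid_bounded d (A (slot b))); auto.
  - intros Hconv. apply Hout. revert Hconv. apply conv_mono. intros z [b [Hb Hz]].
    destruct (Hslot b Hb) as [Hs Hns]. exists (slot b). repeat split; auto.
    apply Mnorm_le_ellipsoid; [apply Ai_spd|..]; auto.
  - exists e. split; [exact He|]. intros a z Ha Hna Hz.
    assert (Hslot_a : slot a = a) by (unfold slot; destruct (Nat.eqb_spec a adag); congruence).
    apply (Hsep a); [exact Ha|]. unfold S. rewrite Hslot_a.
    apply Mnorm_le_ellipsoid; [apply Ai_spd|..]; auto.
Qed.

Lemma not_in_hull_feasible :
  ~ conv d (fun z => exists a, (a < K)%nat /\ a <> adag /\ Mnorm d (Ai a) (vsub z (theta a)) <= r)
       (theta adag) ->
  exists w, forall a, (a < K)%nat -> a <> adag ->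
     dot d w (vsub (theta adag) (theta a)) - xi >= r * Mnorm d (A a) w.
Proof.
  intros Hout. destruct (ellipsoids_separation Hout) as [e [He Hsep]].
  set (s := xi / dot d e e).
  assert (Hsee : s * dot d e e = xi) by (unfold s; field; lra).
  assert (Hs : 0 < s) by (apply Rdiv_lt_0_compat; auto).
  exists (vscal s e). intros a Ha Hna. destruct (A_spd a Ha Hna) as [HS [HP HI]].
  destruct (proj1 (ellipsoid_support d (A a) (Ai a) (theta a) (vscal s e) r HS HP HI r_nonneg))
    as [z [Hz Hzw]].
  pose proof (Hsep a z Ha Hna Hz) as Hez.
  apply (Rmult_le_compat_l s) in Hez; [|lra]. rewrite Rmult_minus_distr_l, Hsee in Hez.
  rewrite !dot_scalr, (dot_comm d (theta a)), (dot_comm d z) in Hzw.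
  rewrite dot_subr, !dot_scall. lra.
Qed.

Theorem feasible_iff_not_in_hull :
  (exists w, forall a, (a < K)%nat -> a <> adag ->
     dot d w (vsub (theta adag) (theta a)) - xi >= r * Mnorm d (A a) w) <->
  ~ conv d (fun z => exists a, (a < K)%nat /\ a <> adag /\ Mnorm d (Ai a) (vsub z (theta a)) <= r)
       (theta adag).
Proof. split; [apply feasible_not_in_hull|apply not_in_hull_feasible]. Qed.

End Feasibility.

Lemma Phi_lt_half c : c < 0 -> Phi c < / 2.
Proof.
  intros Hc. unfold Phi.
  assert (Hs : 0 < / sqrt (2 * PI)).
  { apply Rinv_0_lt_compat, sqrt_lt_R0. pose proof PI_RGT_0. lra. }
  assert (HI : 0 < RiemannInt (gauss_integrable c 0)).
  { set (m := exp (- (c * c) / 2)). assert (Hm : 0 < m) by apply exp_pos.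
    pose proof (RiemannInt_P19 (RiemannInt_P14 c 0 m) (gauss_integrable c 0) ltac:(lra)) as H.
    rewrite RiemannInt_P15 in H.
    assert (m * (0 - c) <= RiemannInt (gauss_integrable c 0)); [|nra].
    apply H. intros x Hx. unfold fct_cte, gauss, m.
    destruct (Req_dec (- (c * c) / 2) (- (x * x) / 2)) as [E|E]; [rewrite E; lra|].
    left. apply exp_increasing. nra. }
  rewrite (RiemannInt_P8 (gauss_integrable 0 c) (gauss_integrable c 0)). nra.
Qed.

Lemma quantile_nonneg K delta c :
  (2 <= K)%nat -> delta <= INR (K - 1) / 2 -> Phi c = 1 - delta / INR (K - 1) -> 0 <= c.
Proof.
  intros HK Hdelta Hc. destruct (Rle_or_lt 0 c) as [Hle|Hneg]; [exact Hle|exfalso].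
  assert (HK1 : 1 <= INR (K - 1)) by (apply (le_INR 1); lia).
  assert (delta / INR (K - 1) <= / 2).
  { apply (Rmult_le_reg_r (INR (K - 1))); [lra|].
    unfold Rdiv. rewrite Rmult_assoc, Rinv_l by lra. lra. }
  pose proof (Phi_lt_half c Hneg). lra.
Qed.

Theorem mainTheorem3
  (d K adag : nat) (ups delta xi c : R) (xdag : vec)
  (theta : nat -> vec) (V Vinv Ainv : nat -> mat) :
  (2 <= d)%nat -> (2 <= K)%nat -> (adag < K)%nat ->
  0 < ups -> 0 < delta < 1 -> 0 < xi ->
  delta <= INR (K - 1) / 2 ->
  (forall a, (a < K)%nat ->
     symmetric d (V a) /\ posdef d (V a) /\ is_inv d (V a) (Vinv a)) ->
  (forall a, (a < K)%nat -> a <> adag ->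
     is_inv d (madd (Vinv a) (Vinv adag)) (Ainv a)) ->
  Phi c = 1 - delta / INR (K - 1) ->
  let C' := fun a (z : vec) => Mnorm d (Ainv a) (vsub z (theta a)) <= ups * c in
  let constr := fun (y : vec) a =>
    dot d (vadd xdag y) (vsub (theta adag) (theta a)) - xi
      >= ups * c * Mnorm d (madd (Vinv a) (Vinv adag)) (vadd xdag y) in
  (forall (y : vec) a, (a < K)%nat -> a <> adag ->
     let vals := fun v => exists z, C' a z /\ v = dot d z (vadd xdag y) in
     (exists m, is_max vals m) /\
     (forall m, is_max vals m ->
        (constr y a <-> dot d (vadd xdag y) (theta adag) - xi >= m)))
  /\
  ((exists y : vec, forall a, (a < K)%nat -> a <> adag -> constr y a) <->
   ~ conv d (fun z => exists a, (a < K)%nat /\ a <> adag /\ C' a z) (theta adag)).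
Proof.
  intros _ HK Had Hups _ Hxi Hdelta HV HAinv Hc C' constr.
  assert (Hr : 0 <= ups * c) by (pose proof (quantile_nonneg K delta c HK Hdelta Hc); nra).
  set (A := fun a => madd (Vinv a) (Vinv adag)).
  assert (HA : forall a, (a < K)%nat -> a <> adag ->
                 symmetric d (A a) /\ psd d (A a) /\ is_inv d (A a) (Ainv a)).
  { intros a Ha Hna.
    destruct (HV a Ha) as [HS [HP HI]], (HV adag Had) as [HS' [HP' HI']].
    destruct (inv_spd d (V a) (Vinv a)), (inv_spd d (V adag) (Vinv adag)); auto using posdef_psd.
    repeat split; [apply symmetric_madd|apply psd_madd|apply HAinv]; auto. }
  split.
  - intros y a Ha Hna vals. destruct (HA a Ha Hna) as [HS [HP HI]].
    pose proof (ellipsoid_support d (A a) (Ainv a) (theta a) (vadd xdag y) (ups * c) HS HP HI Hr)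
      as Hmax.
    split; [eexists; exact Hmax|]. intros m Hm. rewrite (is_max_unique _ _ _ Hm Hmax).
    unfold constr. rewrite dot_subr, (dot_comm d (theta a)). fold (A a). lra.
  - unfold C', constr.
    rewrite <- (feasible_iff_not_in_hull d K adag A Ainv theta (ups * c) xi HK Had Hr Hxi HA).
    split; intros [w Hw].
    + exists (vadd xdag w). exact Hw.
    + exists (vsub w xdag).
      replace (vadd xdag (vsub w xdag)) with w by (extensionality i; unfold vadd, vsub; ring).
      exact Hw.
Qed.
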